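(* Assume (A1)–(A3) and let $\bar u_{\bar e}\in S(\bar e)$. Then $\widehat N((\bar e,\bar u_{\bar e});\operatorname{gph}\mathcal U_{ad})=\{(e^*,u^* )\in E^*\times L^2(\Omega): e^*=(0,0,e^*_\alpha,e^*_\beta),\ u^*=-e^*_\alpha-e^*_\beta,\ e^*_\alpha\ge0\text{ on }\Omega_1(\bar e,\bar u_{\bar e}),\ e^*_\alpha=0\text{ on }\Omega\setminus\Omega_1(\bar e,\bar u_{\bar e}),\ e^*_\beta\le0\text{ on }\Omega_3(\bar e,\bar u_{\bar e}),\ e^*_\beta=0\text{ on }\Omega\setminus\Omega_3(\bar e,\bar u_{\bar e})\}$.
   Context: Let $\Omega\subset\mathbb R^N$, $N\in\{1,2,3\}$; $\alpha,\beta\in L^\infty(\Omega)$, $\alpha\le\beta$, $\alpha\not\equiv\beta$; $\zeta\in L^2(\Omega)$, $\zeta\ge0$. $Ay=-\sum_{i,j}\partial_{x_j}(a_{ij}\partial_{x_i}y)$. $L,f$ Carathéodory, $C^2$ in $y$, with (A1) $f(\cdot,0)\in L^{\bar p}$, $\bar p>N/2$, $\partial f/\partial y\ge0$, $|\partial f/\partial y|+|\partial^2f/\partial y^2|\le C_{f,M}$ for $|y|\le M$, $\partial^2f/\partial y^2(x,\cdot)$ uniformly continuous on $[-M,M]$ uniformly in $x$; (A2) $L(\cdot,0)\in L^1$, $|\partial L/\partial y|\le\psi_M\in L^{\bar p}$, $|\partial^2L/\partial y^2|\le C_{L,M}$ for $|y|\le M$, $\partial^2L/\partial y^2(x,\cdot)$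 uniformly continuous likewise; (A3) $\Omega$ open bounded with Lipschitz boundary $\Gamma$, $\mathcal Q\subset L^2(\Omega)$ closed convex bounded with $\mathcal U_{ad}(e)\cap\operatorname{int}\mathcal Q\ne\emptyset$ for some $e$, $a_{ij}\in C(\bar\Omega)$ uniformly elliptic. $y_u$ solves $Ay+f(x,y)=u$, $y=0$ on $\Gamma$; $J(u)=\int_\Omega L(x,y_u)+\frac12\int_\Omega\zeta u^2$. $E=L^2(\Omega)^4$, $e=(e_y,e_J,e_\alpha,e_\beta)$ with sum norm; $\mathcal U_{ad}(e)=\{u\in L^2:\alpha+e_\alpha\le u\le\beta+e_\beta\text{ a.e.}\}$ viewed as a multifunction $E\rightrightarrows L^2(\Omega)$; $\mathcal G(e)=\mathcal U_{ad}(e)\cap\mathcal Q$; $\mathcal J(u,e)=J(u+e_y)+(e_J,y_{u+e_y})_{L^2}$; $S(e)=\{u\in\mathcal G(e):\mathcal J(u,e)=\inf_{\mathcal G(e)}\mathcal J(\cdot,e)\}$. $\Omega_1(e,u)=\{x:u(x)=\alpha(x)+e_\alpha(x)\}$, $\Omega_3(e,u)=\{x:u(x)=\beta(x)+e_\beta(x)\}$. $\widehat N$ denotes the regular (Fréchet) normal cone. *)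

From HB Require Import structures.
From mathcomp Require Import all_boot all_order all_algebra.
From mathcomp Require Import all_classical all_reals all_analysis.
Set Implicit Arguments. Unset Strict Implicit. Unset Printing Implicit Defensive.
Import Order.TTheory GRing.Theory Num.Theory.
Local Open Scope classical_set_scope.
Local Open Scope ring_scope.

Section Defs.
Context {R : realType} {d : measure_display} {T : measurableType d}.
Variable mu : {measure set T -> \bar R}.
Variable Om : set T.

Definition L2 (f : T -> R) : Prop :=
  measurable_fun Om f /\ mu.-integrable Om (fun x => (f x ^+ 2)%:E).

Definition Linf (f : T -> R) : Prop :=
  measurable_fun Om f /\ exists M : R, {ae mu, forall x, Om x -> `|f x| <= M}.

Definition ip (f g : T -> R) : R := Rintegral mu Om (fun x => f x * g x).
Definition nrm (f : T -> R) : R := Num.sqrt (ip f f).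

(* E = L^2(Omega)^4, e = (e_y, e_J, e_alpha, e_beta), with the sum norm *)
Record E4 := mkE { ey : T -> R; eJ : T -> R; ea : T -> R; eb : T -> R }.
Definition E4L2 (e : E4) : Prop := [/\ L2 (ey e), L2 (eJ e), L2 (ea e) & L2 (eb e)].
Definition E4sub (e e' : E4) : E4 :=
  mkE (ey e \- ey e') (eJ e \- eJ e') (ea e \- ea e') (eb e \- eb e').
Definition nrmE (e : E4) : R := nrm (ey e) + nrm (eJ e) + nrm (ea e) + nrm (eb e).
(* duality pairing of E^* = L^2(Omega)^4 (Riesz) with E *)
Definition ipE (es e : E4) : R :=
  ip (ey es) (ey e) + ip (eJ es) (eJ e) + ip (ea es) (ea e) + ip (eb es) (eb e).

Definition Uad (alpha beta : T -> R) (e : E4) (u : T -> R) : Prop :=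
  L2 u /\ {ae mu, forall x, Om x ->
           alpha x + ea e x <= u x /\ u x <= beta x + eb e x}.

Definition gphUad (alpha beta : T -> R) : set (E4 * (T -> R)) :=
  [set p | E4L2 p.1 /\ Uad alpha beta p.1 p.2].

(* regular (Frechet) normal cone to C at (eb0,ub0) in E x L^2(Omega),
   elements of the dual identified with E4 x L^2 via Riesz:
   limsup_{(e,u) -> (eb0,ub0), (e,u) in C} <(es,us),(e,u)-(eb0,ub0)> / ||(e,u)-(eb0,ub0)|| <= 0 *)
Definition regular_normal (C : set (E4 * (T -> R))) (eb0 : E4) (ub0 : T -> R)
  : set (E4 * (T -> R)) :=
  [set q | E4L2 q.1 /\ L2 q.2 /\
     forall eps : R, 0 < eps -> exists2 del : R, 0 < del &
       forall e u, C (e, u) ->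
         nrmE (E4sub e eb0) + nrm (u \- ub0) < del ->
         ipE q.1 (E4sub e eb0) + ip q.2 (u \- ub0)
           <= eps * (nrmE (E4sub e eb0) + nrm (u \- ub0))].

Definition Jcost (ysol : (T -> R) -> (T -> R)) (L : T -> R -> R) (zeta : T -> R)
  (u : T -> R) : R :=
  Rintegral mu Om (fun x => L x (ysol u x))
  + 2^-1 * Rintegral mu Om (fun x => zeta x * u x ^+ 2).

Definition Jpert ysol L zeta (u : T -> R) (e : E4) : R :=
  Jcost ysol L zeta (u \+ ey e) + ip (eJ e) (ysol (u \+ ey e)).

Definition Gfeas alpha beta (Q : set (T -> R)) (e : E4) : set (T -> R) :=
  [set u | Uad alpha beta e u /\ Q u].

Definition Ssol ysol L zeta alpha beta Q (e : E4) : set (T -> R) :=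
  [set u | Gfeas alpha beta Q e u /\
     forall v, Gfeas alpha beta Q e v -> Jpert ysol L zeta u e <= Jpert ysol L zeta v e].

Definition Om1 (alpha : T -> R) (e : E4) (u : T -> R) : set T :=
  [set x | Om x /\ u x = alpha x + ea e x].
Definition Om3 (beta : T -> R) (e : E4) (u : T -> R) : set T :=
  [set x | Om x /\ u x = beta x + eb e x].

Definition L2closed (Q : set (T -> R)) : Prop :=
  forall (f : nat -> T -> R) (g : T -> R), (forall n, Q (f n)) -> L2 g ->
    (forall eps : R, 0 < eps -> exists N : nat, forall n, (N <= n)%N -> nrm (f n \- g) < eps) ->
    Q g.
Definition L2convex (Q : set (T -> R)) : Prop :=
  forall f g (t : R), Q f -> Q g -> 0 <= t <= 1 ->
    Q (fun x => t * f x + (1 - t) * g x).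
Definition L2bounded (Q : set (T -> R)) : Prop :=
  exists M : R, forall f, Q f -> nrm f <= M.
Definition Slater alpha beta (Q : set (T -> R)) : Prop :=
  exists e u, E4L2 e /\ Uad alpha beta e u /\
    exists2 r : R, 0 < r & forall v, L2 v -> nrm (v \- u) < r -> Q v.

End Defs.

(* The graph of U_ad is convex, so a regular normal (e', u') at (ebar, ubar) is exactly
   a vector with <e', e - ebar> + <u', u - ubar> <= 0 on the whole graph: along a segment
   the Frechet quotient is constant.  For a multiplier of the stated form this pairing is
   the integral of
     e'_a ((alpha + e_a - u) - (alpha + ebar_a - ubar))
     + (- e'_b) ((u - beta - e_b) - (ubar - beta - ebar_b)),
   pointwise <= 0 by complementary slackness.  Conversely, let h = e'_a + e'_b + u' and
   let s_a, s_b >= 0 be the slacks of ubar at its two bounds.  The single feasible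
   direction (e'_y, e'_J, min(e'_a, s_a) + h, - min(- e'_b, s_b) + h; h) pairs with
   (e', u') to the integral of
     e'_y^2 + e'_J^2 + h^2 + e'_a min(e'_a, s_a) + (- e'_b) min(- e'_b, s_b),
   a sum of nonnegative terms.  So every term vanishes a.e., and these are exactly the
   sign and complementarity conditions. *)

From Pilot Require Import Defs.
From HB Require Import structures.
From mathcomp Require Import all_boot all_order all_algebra.
From mathcomp Require Import all_classical all_reals all_analysis.
From mathcomp Require Import lra measurable_realfun.
Set Implicit Arguments. Unset Strict Implicit. Unset Printing Implicit Defensive.
Import Order.TTheory GRing.Theory Num.Theory.
Local Open Scope classical_set_scope.
Local Open Scope ring_scope.

Section L2_space.
Context {R : realType} {d : measure_display} {T : measurableType d}.
Variables (mu : {measure set T -> \bar R}) (Om : set T).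
Hypothesis mOm : measurable Om.

Local Notation L2 := (L2 mu Om).
Local Notation ip := (ip mu Om).
Local Notation nrm := (nrm mu Om).
Local Notation integrableR f := (mu.-integrable Om (EFin \o f)).

Lemma integrableR_le (f g : T -> R) : measurable_fun Om f ->
  (forall x, Om x -> `|f x| <= `|g x|) -> integrableR g -> integrableR f.
Proof.
move=> mf fg intg; apply: (le_integrable mOm _ _ intg); first exact/measurable_EFinP.
by move=> x Ox /=; rewrite lee_fin fg.
Qed.

Lemma integrableR_lin (f g : T -> R) a b : integrableR f -> integrableR g ->
  integrableR (fun x => a * f x + b * g x).
Proof.
move=> intf intg.
have := integrableD mOm (integrableZl mOm a intf) (integrableZl mOm b intg).
by apply: eq_integrable => // x _ /=; rewrite EFinD !EFinM.
Qed.

Lemma integrableRD (f g : T -> R) : integrableR f -> integrableR g ->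
  integrableR (fun x => f x + g x).
Proof.
by move=> intf intg; have := integrableR_lin 1 1 intf intg; under eq_fun do rewrite !mul1r.
Qed.

Lemma L2_le (f g : T -> R) : measurable_fun Om f ->
  (forall x, Om x -> `|f x| <= `|g x|) -> L2 g -> L2 f.
Proof.
move=> mf fg [mg intg]; split => //.
apply: (integrableR_le (g := fun x => g x ^+ 2)) intg; first exact: measurable_funM.
move=> x Ox; rewrite !normrX lerXn2r ?nnegrE //; exact: fg.
Qed.

Lemma L2_lin (f g : T -> R) a b : L2 f -> L2 g -> L2 (fun x => a * f x + b * g x).
Proof.
move=> [mf intf] [mg intg]; split.
  by apply: measurable_funD; apply: measurable_funM => //; exact: measurable_cst.
apply: (integrableR_le (g := fun x => (2 * a ^+ 2) * f x ^+ 2 + (2 * b ^+ 2) * g x ^+ 2)).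
- apply: measurable_funM; apply: measurable_funD; apply: measurable_funM => //;
    exact: measurable_cst.
- move=> x _ /=; set u := a * f x; set v := b * g x.
  have -> : 2 * a ^+ 2 * f x ^+ 2 + 2 * b ^+ 2 * g x ^+ 2 = 2 * u ^+ 2 + 2 * v ^+ 2.
    by rewrite /u /v !exprMn !mulrA.
  rewrite ger0_norm ?sqr_ge0 // ger0_norm; last by rewrite addr_ge0 // mulr_ge0 // sqr_ge0.
  have := sqr_ge0 (u - v); nra.
- exact: integrableR_lin.
Qed.

Lemma L2D (f g : T -> R) : L2 f -> L2 g -> L2 (fun x => f x + g x).
Proof.
by move=> Lf Lg; have := L2_lin 1 1 Lf Lg; under eq_fun do rewrite !mul1r.
Qed.

Lemma L2B (f g : T -> R) : L2 f -> L2 g -> L2 (f \- g).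
Proof.
by move=> Lf Lg; have := L2_lin 1 (-1) Lf Lg; under eq_fun do rewrite mul1r mulN1r.
Qed.

Lemma integrableR_mul (f g : T -> R) : L2 f -> L2 g -> integrableR (fun x => f x * g x).
Proof.
move=> [mf intf] [mg intg].
apply: (integrableR_le (g := fun x => 1 * f x ^+ 2 + 1 * g x ^+ 2)).
- exact: measurable_funM.
- move=> x _; rewrite !mul1r [`|_ + _|]ger0_norm ?addr_ge0 ?sqr_ge0 //.
  rewrite normrM -[f x ^+ 2]real_normK ?num_real // -[g x ^+ 2]real_normK ?num_real //.
  have := sqr_ge0 (`|f x| - `|g x|); nra.
- exact: integrableR_lin.
Qed.

Lemma ipZr (f h : T -> R) t : L2 f -> L2 h -> ip f (fun x => t * h x) = t * ip f h.
Proof.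
move=> Lf Lh; rewrite /Defs.ip; under eq_Rintegral do rewrite mulrCA.
by rewrite RintegralZl //; exact: integrableR_mul.
Qed.

Lemma nrmZ (h : T -> R) t : 0 <= t -> L2 h -> nrm (fun x => t * h x) = t * nrm h.
Proof.
move=> t0 Lh; rewrite /Defs.nrm /Defs.ip.
under eq_Rintegral do rewrite mulrACA -expr2.
rewrite RintegralZl; [|by []|exact: integrableR_mul].
by rewrite sqrtrM ?sqr_ge0 // sqrtr_sqr ger0_norm.
Qed.

Lemma nrm_ge0 (f : T -> R) : 0 <= nrm f.
Proof. exact: sqrtr_ge0. Qed.

Lemma ge0_Rintegral_le0_ae_eq0 (f : T -> R) : integrableR f ->
  (forall x, Om x -> 0 <= f x) -> Rintegral mu Om f <= 0 ->
  {ae mu, forall x, Om x -> f x = 0}.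
Proof.
move=> intf f0 intf_le0.
have int_eq0 : (\int[mu]_(x in Om) (EFin \o f) x = 0)%E.
  apply/eqP; rewrite eq_le integral_ge0 ?andbT; last by move=> x Ox; rewrite lee_fin f0.
  by rewrite -(fineK (integrable_fin_num mOm intf)) lee_fin.
have : (\int[mu]_(x in Om) `|(EFin \o f) x| = 0)%E.
  rewrite -int_eq0; apply: eq_integral => x /set_mem Ox /=.
  by rewrite ger0_norm // f0.
move/(ae_eq_integral_abs mu mOm (measurable_int mu intf)).
by apply: filterS => x fx0 Ox; case: (fx0 Ox).
Qed.

Lemma ae_le0_Rintegral_le0 (f : T -> R) : integrableR f ->
  {ae mu, forall x, Om x -> f x <= 0} -> Rintegral mu Om f <= 0.
Proof.
move=> intf f_le0.
have mf : measurable_fun Om f by apply/measurable_EFinP; exact: measurable_int intf.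
(* [Rintegral_ge0] needs a pointwise sign: replace f by the a.e. equal [min f 0]. *)
pose g x := Num.min (f x) 0.
have mg : measurable_fun Om g by apply: measurable_minr => //; exact: measurable_cst.
have intg : integrableR g.
  apply: integrableR_le mg _ intf => x _; rewrite /g minEle.
  by case: ifP; rewrite ?normr0 ?normr_ge0.
have -> : Rintegral mu Om f = Rintegral mu Om g.
  congr fine; apply: ae_eq_integral => //; try exact/measurable_EFinP.
  by apply: filterS f_le0 => x fx Ox /=; rewrite /g minEle fx.
rewrite -oppr_ge0 -mulN1r -RintegralZl //; apply: Rintegral_ge0 => x _.
by rewrite mulN1r oppr_ge0 /g ge_min lexx orbT.
Qed.

Lemma ipE_ip_Rintegral (es e : @E4 R d T) (us u : T -> R) :
  E4L2 mu Om es -> E4L2 mu Om e -> L2 us -> L2 u ->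
  ipE mu Om es e + ip us u = Rintegral mu Om (fun x =>
    ey es x * ey e x + eJ es x * eJ e x + ea es x * ea e x + eb es x * eb e x
    + us x * u x).
Proof.
move=> [? ? ? ?] [? ? ? ?] ? ?.
by rewrite /ipE /Defs.ip !RintegralD //; do ?apply: integrableRD; exact: integrableR_mul.
Qed.

End L2_space.

Lemma le0_of_le_eps_mul {R : realFieldType} (p n : R) : 0 <= n ->
  (forall eps, 0 < eps -> p <= eps * n) -> p <= 0.
Proof.
move=> n0 le_p; apply/ler_addgt0Pr => e e0; rewrite add0r.
have n1_gt0 : 0 < n + 1 by rewrite ltr_wpDl.
apply: (le_trans (le_p _ (divr_gt0 e0 n1_gt0))).
by rewrite mulrAC ler_pdivrMr // ler_pM2l // lerDl.
Qed.

Section regular_normal_cone.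
Context {R : realType} {d : measure_display} {T : measurableType d}.

Definition ray (f g : T -> R) (t : R) : T -> R := fun x => f x + t * g x.

Definition E4ray (e v : @E4 R d T) (t : R) : @E4 R d T :=
  mkE (ray (ey e) (ey v) t) (ray (eJ e) (eJ v) t) (ray (ea e) (ea v) t) (ray (eb e) (eb v) t).

Lemma ray_subl (f g : T -> R) t : ray f g t \- f = (fun x => t * g x).
Proof. by apply/funext => x /=; rewrite /ray addrAC subrr add0r. Qed.

Lemma E4sub_ray (e v : @E4 R d T) t : E4sub (E4ray e v t) e =
  mkE (fun x => t * ey v x) (fun x => t * eJ v x) (fun x => t * ea v x) (fun x => t * eb v x).
Proof. by rewrite /E4sub /= !ray_subl. Qed.

Variables (mu : {measure set T -> \bar R}) (Om : set T).
Hypothesis mOm : measurable Om.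

Local Notation L2 := (L2 mu Om).
Local Notation ip := (ip mu Om).
Local Notation nrm := (nrm mu Om).

Lemma L2_ray (f g : T -> R) t : L2 f -> L2 g -> L2 (ray f g t).
Proof.
by move=> Lf Lg; have := L2_lin mOm 1 t Lf Lg; under eq_fun do rewrite mul1r.
Qed.

Lemma E4L2_ray (e v : @E4 R d T) t :
  E4L2 mu Om e -> E4L2 mu Om v -> E4L2 mu Om (E4ray e v t).
Proof. by move=> [? ? ? ?] [? ? ? ?]; split; apply: L2_ray. Qed.

Lemma regular_normal_ray_le0 (C : set (@E4 R d T * (T -> R))) e0 u0 q v w :
  regular_normal mu Om C e0 u0 q -> E4L2 mu Om v -> L2 w ->
  (forall t, 0 < t <= 1 -> C (E4ray e0 v t, ray u0 w t)) ->
  ipE mu Om q.1 v + ip q.2 w <= 0.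
Proof.
case: q => qe qu [/= [Lqy LqJ Lqa Lqb] [Lqu qN]] [Lvy LvJ Lva Lvb] Lw Cray.
set p := _ + _; set n := nrmE mu Om v + nrm w.
apply: (le0_of_le_eps_mul (n := n)); first by rewrite !addr_ge0 ?nrm_ge0.
move=> eps eps0; have [del del0 near_del] := qN eps eps0.
have n1_gt0 : 0 < n + 1 by rewrite ltr_wpDl // !addr_ge0 ?nrm_ge0.
pose t := Num.min 1 (del / (n + 1)).
have t0 : 0 < t by rewrite lt_min ltr01 divr_gt0.
have t01 : 0 < t <= 1 by rewrite t0 ge_min lexx.
have tn_lt_del : t * n < del.
  apply: (lt_le_trans (y := t * (n + 1))); first by rewrite ltr_pM2l // ltrDl.
  by rewrite -ler_pdivlMr // ge_min lexx orbT.
have scale_n : nrmE mu Om (E4sub (E4ray e0 v t) e0) + nrm (ray u0 w t \- u0) = t * n.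
  by rewrite E4sub_ray ray_subl /nrmE /= !nrmZ ?(ltW t0) // !mulrDr.
have scale_p : ipE mu Om qe (E4sub (E4ray e0 v t) e0) + ip qu (ray u0 w t \- u0) = t * p.
  by rewrite E4sub_ray ray_subl /ipE /= !ipZr // !mulrDr.
rewrite -(ler_pM2l t0) mulrCA -scale_p -scale_n.
by apply: (near_del _ _ (Cray t t01)); rewrite scale_n.
Qed.

Lemma regular_normal_of_le0 (C : set (@E4 R d T * (T -> R))) e0 u0 q :
  E4L2 mu Om q.1 -> L2 q.2 ->
  (forall e u, C (e, u) -> ipE mu Om q.1 (E4sub e e0) + ip q.2 (u \- u0) <= 0) ->
  regular_normal mu Om C e0 u0 q.
Proof.
move=> Lq1 Lq2 q_le0; split=> //; split=> // eps eps0; exists 1 => // e u Ceu _.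
apply: le_trans (q_le0 _ _ Ceu) _.
by rewrite mulr_ge0 ?(ltW eps0) // /nrmE !addr_ge0 ?nrm_ge0.
Qed.

End regular_normal_cone.

Section graph_of_Uad.
Context {R : realType} {d : measure_display} {T : measurableType d}.
Variables (mu : {measure set T -> \bar R}) (Om : set T).
Hypothesis mOm : measurable Om.
Variables alpha beta : T -> R.

Local Notation L2 := (L2 mu Om).
Local Notation gph := (gphUad mu Om alpha beta).

Lemma gphUad_ray e u (v : @E4 R d T) w t : gph (e, u) -> E4L2 mu Om v -> L2 w ->
  gph (E4ray e v 1, ray u w 1) -> 0 <= t <= 1 -> gph (E4ray e v t, ray u w t).
Proof.
move=> [Le [Lu feas0]] Lv Lw [_ [_ feas1]] /andP[t0 t1].
split; first exact: E4L2_ray.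
split; first exact: L2_ray.
apply: filterS2 feas0 feas1 => x feas0x feas1x Ox.
have [lo0 hi0] := feas0x Ox; have [lo1 hi1] := feas1x Ox.
rewrite /= /ray ?mul1r in lo0 hi0 lo1 hi1 *; split; nra.
Qed.

Lemma regular_normal_gphUad_le0 e0 u0 q v w :
  regular_normal mu Om gph e0 u0 q -> gph (e0, u0) -> E4L2 mu Om v -> L2 w ->
  gph (E4ray e0 v 1, ray u0 w 1) -> ipE mu Om q.1 v + ip mu Om q.2 w <= 0.
Proof.
move=> qN gph0 Lv Lw gph1; apply: (regular_normal_ray_le0 mOm qN Lv Lw) => t /andP[t0 t1].
by apply: gphUad_ray => //; rewrite ltW.
Qed.

End graph_of_Uad.

Section pointwise.
Context {R : realFieldType}.
Implicit Types a s : R.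

Definition clip a s := Num.min a (Num.max s 0).

Lemma clip_le a s : 0 <= s -> clip a s <= s.
Proof. by move=> s0; rewrite ge_min max_l ?lexx ?orbT. Qed.

Lemma norm_clip_le a s : `|clip a s| <= `|a|.
Proof.
rewrite /clip minEle maxEle; case: ifP; case: ifP => // ? ?; rewrite ?normr0 ?normr_ge0 //.
by rewrite !ger0_norm //; lra.
Qed.

Lemma mul_clip_ge0 a s : 0 <= a * clip a s.
Proof. by rewrite /clip minEle maxEle; case: ifP; case: ifP => ? ?; nra. Qed.

Lemma mul_clip_eq0 a s : a * clip a s = 0 -> 0 <= a /\ (0 < s -> a = 0).
Proof. by rewrite /clip minEle maxEle; case: ifP; case: ifP => ? ? ?; split; nra. Qed.

Lemma slack_mul_le0 q r s : q = 0 \/ 0 <= q /\ s = 0 -> r <= 0 -> q * (r - s) <= 0.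
Proof. by case=> [->|[q0 ->]] r0; rewrite ?mul0r // subr0 mulr_ge0_le0. Qed.

(* The integrand of the pairing of [((qy, qJ, qa, qb), qu)] with the test direction
   [((qy, qJ, clip qa sa + h, - clip (- qb) sb + h), h)]. *)
Definition test_integrand (qy qJ qa qb qu sa sb : R) :=
  let h := qa + qb + qu in
  qy * qy + qJ * qJ + qa * (clip qa sa + h) + qb * (- clip (- qb) sb + h) + qu * h.

Lemma test_integrandE qy qJ qa qb qu sa sb :
  test_integrand qy qJ qa qb qu sa sb = qy ^+ 2 + qJ ^+ 2 + (qa + qb + qu) ^+ 2
    + qa * clip qa sa + (- qb) * clip (- qb) sb.
Proof. by rewrite /test_integrand; lra. Qed.

Lemma test_integrand_ge0 qy qJ qa qb qu sa sb : 0 <= test_integrand qy qJ qa qb qu sa sb.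
Proof. by rewrite test_integrandE !addr_ge0 ?sqr_ge0 ?mul_clip_ge0. Qed.

Lemma test_integrand_eq0 qy qJ qa qb qu sa sb :
  test_integrand qy qJ qa qb qu sa sb = 0 ->
  [/\ qy = 0, qJ = 0, qu = - qa - qb,
      0 <= qa /\ (0 < sa -> qa = 0) & qb <= 0 /\ (0 < sb -> qb = 0)].
Proof.
move/eqP; rewrite test_integrandE !paddr_eq0 ?addr_ge0 ?sqr_ge0 ?mul_clip_ge0 // !sqrf_eq0.
move=> /andP[/andP[/andP[/andP[/eqP -> /eqP ->] /eqP h0] /eqP/mul_clip_eq0 [qa0 qa_slack]]].
move=> /eqP/mul_clip_eq0 [qb0 qb_slack]; split=> //; first lra.
by split=> [|sb0]; [lra | apply/eqP; rewrite -oppr_eq0 (qb_slack sb0)].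
Qed.

End pointwise.

Section normal_cone_of_gphUad.
Context {R : realType} {d : measure_display} {T : measurableType d}.
Variables (mu : {measure set T -> \bar R}) (Om : set T).
Hypothesis mOm : measurable Om.
Variables (alpha beta : T -> R) (ebar : @E4 R d T) (ubar : T -> R).
Hypotheses (malpha : measurable_fun Om alpha) (mbeta : measurable_fun Om beta).
Hypotheses (Lebar : E4L2 mu Om ebar) (ubar_feas : Uad mu Om alpha beta ebar ubar).

Local Notation L2 := (L2 mu Om).
Local Notation gph := (gphUad mu Om alpha beta).

Definition multiplier_condition (q : @E4 R d T * (T -> R)) (x : T) : Prop :=
  [/\ ey q.1 x = 0, eJ q.1 x = 0 & q.2 x = - ea q.1 x - eb q.1 x] /\
  [/\ (Om1 Om alpha ebar ubar x -> 0 <= ea q.1 x),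
      (~ Om1 Om alpha ebar ubar x -> ea q.1 x = 0),
      (Om3 Om beta ebar ubar x -> eb q.1 x <= 0) &
      (~ Om3 Om beta ebar ubar x -> eb q.1 x = 0)].

Lemma multiplier_regular_normal q : E4L2 mu Om q.1 -> L2 q.2 ->
  {ae mu, forall x, Om x -> multiplier_condition q x} ->
  regular_normal mu Om gph ebar ubar q.
Proof.
case: q => qe qu /= Lqe Lqu qmult; apply: regular_normal_of_le0 => // e u [/= Le [/= Lu feas]].
have Lsub : E4L2 mu Om (E4sub e ebar).
  by case: Le Lebar => ? ? ? ? [? ? ? ?]; split; apply: (L2B mOm).
have Lusub : L2 (u \- ubar) by apply: (L2B mOm Lu); case: ubar_feas.
rewrite ipE_ip_Rintegral //; apply: (ae_le0_Rintegral_le0 mOm).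
  by case: Lqe Lsub => ? ? ? ? [? ? ? ?]; do ?apply: (integrableRD mOm);
    exact: (integrableR_mul mOm).
apply: filterS3 qmult feas ubar_feas.2 => x qx feasx ubarx Ox.
move: (qx Ox); rewrite /multiplier_condition /= => -[[-> -> ->] [q1 q1' q3 q3']].
have [lo hi] := feasx Ox; have [lo' hi'] := ubarx Ox.
rewrite /= !mul0r !add0r.
have slack_a : ea qe x * ((alpha x + ea e x - u x) - (alpha x + ea ebar x - ubar x)) <= 0.
  apply: slack_mul_le0; last lra.
  case: (pselect (Om1 Om alpha ebar ubar x)) => [[_ u1]|/q1' ->]; last by left.
  by right; split; [exact: q1|lra].
have slack_b : - eb qe x * ((u x - beta x - eb e x) - (ubar x - beta x - eb ebar x)) <= 0.
  apply: slack_mul_le0; last lra.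
  case: (pselect (Om3 Om beta ebar ubar x)) => [[_ u3]|/q3' ->]; last by left; rewrite oppr0.
  by right; split; [rewrite oppr_ge0; exact: q3|lra].
lra.
Qed.

Definition lower_slack (x : T) : R := ubar x - alpha x - ea ebar x.
Definition upper_slack (x : T) : R := beta x + eb ebar x - ubar x.

Definition test_du (q : @E4 R d T * (T -> R)) (x : T) : R := ea q.1 x + eb q.1 x + q.2 x.
Definition test_de (q : @E4 R d T * (T -> R)) : @E4 R d T :=
  mkE (ey q.1) (eJ q.1)
    (fun x => clip (ea q.1 x) (lower_slack x) + test_du q x)
    (fun x => - clip (- eb q.1 x) (upper_slack x) + test_du q x).

Lemma L2_test_direction q : E4L2 mu Om q.1 -> L2 q.2 ->
  E4L2 mu Om (test_de q) /\ L2 (test_du q).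
Proof.
move=> [Lqy LqJ Lqa Lqb] Lqu.
have [[[mubar _] _] [_ _ [mea _] [meb _]]] := (ubar_feas, Lebar).
have Lh : L2 (test_du q) by do 2?apply: (L2D mOm).
have Lca : L2 (fun x => clip (ea q.1 x) (lower_slack x)).
  apply: (L2_le mOm _ (fun x _ => norm_clip_le _ _) Lqa).
  apply: measurable_minr; first by case: Lqa.
  apply: measurable_maxr; last exact: measurable_cst.
  by do 2?apply: measurable_funB.
have Lcb : L2 (fun x => - clip (- eb q.1 x) (upper_slack x)).
  have norm_le x : `|- clip (- eb q.1 x) (upper_slack x)| <= `|eb q.1 x|.
    by rewrite normrN (le_trans (norm_clip_le _ _)) ?normrN.
  apply: (L2_le mOm _ (fun x _ => norm_le x) Lqb).
  apply: measurable_funN; apply: measurable_minr; first by apply: measurable_funN; case: Lqb.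
  apply: measurable_maxr; last exact: measurable_cst.
  by apply: measurable_funB => //; apply: measurable_funD.
by split=> //; split=> //; apply: (L2D mOm).
Qed.

Lemma gphUad_test_direction q : E4L2 mu Om q.1 -> L2 q.2 ->
  gph (E4ray ebar (test_de q) 1, ray ubar (test_du q) 1).
Proof.
move=> Lq1 Lq2; have [Lv Lh] := L2_test_direction Lq1 Lq2.
have [Lubar feas] := ubar_feas.
split; first exact: E4L2_ray.
split; first exact: L2_ray.
apply: filterS feas => x feasx Ox; have [lo hi] := feasx Ox.
have /(clip_le (ea q.1 x)) ca_le : 0 <= lower_slack x by rewrite /lower_slack; lra.
have /(clip_le (- eb q.1 x)) cb_le : 0 <= upper_slack x by rewrite /upper_slack; lra.
rewrite /lower_slack /upper_slack in ca_le cb_le.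
by rewrite /= /ray /= !mul1r; split; lra.
Qed.

Lemma regular_normal_multiplier q : regular_normal mu Om gph ebar ubar q ->
  {ae mu, forall x, Om x -> multiplier_condition q x}.
Proof.
case: q => qe qu qN; have [/= Lqe [/= Lqu _]] := qN.
have [Lv Lh] := L2_test_direction (q := (qe, qu)) Lqe Lqu.
have := regular_normal_gphUad_le0 mOm qN (conj Lebar ubar_feas) Lv Lh
  (gphUad_test_direction (q := (qe, qu)) Lqe Lqu).
rewrite ipE_ip_Rintegral //= => int_le0.
have phi_eq0 : {ae mu, forall x, Om x -> test_integrand (ey qe x) (eJ qe x)
    (ea qe x) (eb qe x) (qu x) (lower_slack x) (upper_slack x) = 0}.
  apply: (ge0_Rintegral_le0_ae_eq0 mOm _ _ int_le0) => [|x _];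
    last exact: test_integrand_ge0.
  by case: Lqe Lv => ? ? ? ? [? ? ? ?]; do ?apply: (integrableRD mOm);
    apply: (integrableR_mul mOm).
apply: filterS2 phi_eq0 ubar_feas.2 => x phix feasx Ox; have [lo hi] := feasx Ox.
rewrite /multiplier_condition /=.
have [-> -> -> [qa0 qa_slack] [qb0 qb_slack]] := test_integrand_eq0 (phix Ox).
split=> //; split=> // [notOm1|notOm3].
- apply: qa_slack; rewrite lt0r /lower_slack; apply/andP; split; last lra.
  by apply/eqP => sa0; apply: notOm1; split=> //; lra.
- apply: qb_slack; rewrite lt0r /upper_slack; apply/andP; split; last lra.
  by apply/eqP => sb0; apply: notOm3; split=> //; lra.
Qed.

End normal_cone_of_gphUad.

Theorem lemma3p2 (R : realType) (d : measure_display) (T : measurableType d)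
  (mu : {measure set T -> \bar R}) (Om : set T)
  (alpha beta zeta : T -> R) (L : T -> R -> R)
  (ysol : (T -> R) -> (T -> R)) (Q : set (T -> R))
  (ebar : @E4 R d T) (ubar : T -> R) :
  measurable Om -> (mu Om < +oo)%E ->
  Linf mu Om alpha -> Linf mu Om beta ->
  {ae mu, forall x, Om x -> alpha x <= beta x} ->
  ~ {ae mu, forall x, Om x -> alpha x = beta x} ->
  L2 mu Om zeta -> {ae mu, forall x, Om x -> 0 <= zeta x} ->
  (forall u, Q u -> L2 mu Om u) ->
  L2closed mu Om Q -> L2convex Q -> L2bounded mu Om Q ->
  Slater mu Om alpha beta Q ->
  E4L2 mu Om ebar ->
  Ssol mu Om ysol L zeta alpha beta Q ebar ubar ->
  regular_normal mu Om (gphUad mu Om alpha beta) ebar ubar =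
  [set q | E4L2 mu Om q.1 /\ L2 mu Om q.2 /\
     {ae mu, forall x, Om x ->
        [/\ ey q.1 x = 0, eJ q.1 x = 0 &
            q.2 x = - ea q.1 x - eb q.1 x] /\
        [/\ (Om1 Om alpha ebar ubar x -> 0 <= ea q.1 x),
            (~ Om1 Om alpha ebar ubar x -> ea q.1 x = 0),
            (Om3 Om beta ebar ubar x -> eb q.1 x <= 0) &
            (~ Om3 Om beta ebar ubar x -> eb q.1 x = 0)]}].
Proof.
move=> mOm _ [malpha _] [mbeta _] _ _ _ _ _ _ _ _ _ Lebar [[ubar_feas _] _].
apply/seteqP; split=> q.
- move=> qN; have [Lq1 [Lq2 _]] := qN; split=> //; split=> //.
  exact: (regular_normal_multiplier mOm malpha mbeta Lebar ubar_feas).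
- by move=> [Lq1 [Lq2 qmult]]; exact: (multiplier_regular_normal mOm Lebar ubar_feas).
Qed.
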